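(* Let $\mathrm{SU}(2)\subset\mathrm{SO}(4)\times\{1\}$ act on $\Lambda^2_-S^4$. Every point is mapped into the fiber over some ${}^t(x_1,0,0,0,x_5)$ with $x_1\ge0$. For $p_0$ in that fiber, the orbit $\mathrm{SU}(2)\cdot p_0$ is diffeomorphic to $S^3$ if $x_5\ne\pm1$; to $S^2$ if $x_5=1$ and $p_0\ne0$; and to a point if $x_5=1$ and $p_0=0$, or if $x_5=-1$.
   Context: $S^4\subset\mathbb R^5$ is the unit sphere, $\Lambda^2_-S^4$ the bundle of anti-self-dual 2-forms (round metric); $\mathrm{SO}(5)$ acts on $\Lambda^2_-S^4$ by lifting its linear action on $S^4$ to 2-forms ($g\cdot\omega=(g^{-1})^*\omega$). $\mathrm{SU}(2)$ acts $\mathbb C$-linearly on $\mathbb C^2\cong\mathbb R^4$ via $(z_1,z_2)=(x_1+ix_2,x_3+ix_4)$ and fixes $x_5$; $p_0=0$ means $p_0$ lies in the zero section. *)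

From mathcomp Require Import all_boot all_order all_algebra all_classical all_reals all_analysis.
Import numFieldNormedType.Exports.
Import Order.TTheory GRing.Theory Num.Theory.
Set Implicit Arguments. Unset Strict Implicit. Unset Printing Implicit Defensive.
Local Open Scope ring_scope.
Local Open Scope classical_set_scope.

Fixpoint iterD {R : realType} {V W : normedModType R} (vs : seq V) (f : V -> W) : V -> W :=
  match vs with
  | [::] => f
  | v :: vs' => fun x => derive (iterD vs' f) x v
  end.

Definition smooth_on {R : realType} {V W : normedModType R} (U : set V) (f : V -> W) : Prop :=
  forall vs : seq V,
    (forall x, U x -> {for x, continuous (iterD vs f)}) /\
    (forall x v, U x -> derivable (iterD vs f) x v).

Definition smooth_map {R : realType} {V W : normedModType R} (A : set V) (f : V -> W) : Prop :=
  forall a, A a -> exists U : set V, [/\ open U, U a &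
     (exists F : V -> W, smooth_on U F /\ (forall y, U y -> A y -> F y = f y))].

Definition diffeomorphic {R : realType} {V W : normedModType R} (A : set V) (B : set W) : Prop :=
  exists (f : V -> W) (g : W -> V),
    [/\ (forall a, A a -> B (f a)), (forall b, B b -> A (g b)),
        (forall a, A a -> g (f a) = a), (forall b, B b -> f (g b) = b) &
        (smooth_map A f /\ smooth_map B g)].

(* unit sphere S^{n-1} in R^n (column vectors) *)
Definition sphere {R : realType} (n : nat) : set 'cV[R]_n :=
  [set v | \sum_(i < n) v i 0 ^+ 2 = 1].

Definition point_space {R : realType} : set 'cV[R]_1 := [set 0].

Definition eps5 {R : realType} (m i j k l : 'I_5) : R :=
  \det (\matrix_(r < 5, c < 5) ((nth ord0 [:: m; i; j; k; l] r == c)%:R : R)).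

(* Hodge star on 2-forms on the tangent space T_x S^4 = x^perp, with S^4
   oriented as the boundary of the unit ball (outward normal first):
   vol_{T_x}(u1,..,u4) = det[x,u1,..,u4].  A 2-form is represented by the
   skew matrix Om with omega(u,v) = u^T Om v. *)
Definition hodge {R : realType} (x : 'cV[R]_5) (Om : 'M[R]_5) : 'M[R]_5 :=
  \matrix_(i, j) (2^-1 * \sum_(m < 5) \sum_(k < 5) \sum_(l < 5)
                     eps5 m i j k l * x m 0 * Om k l).

(* total space of Lambda^2_- S^4: pairs (x, Om) with x in S^4 and Om an
   anti-self-dual 2-form on T_x S^4 (skew, annihilating the normal x) *)
Definition ASD_bundle {R : realType} : set ('cV[R]_5 * 'M[R]_5) :=
  [set p : 'cV[R]_5 * 'M[R]_5 | [/\ \sum_(i < 5) p.1 i 0 ^+ 2 = 1, p.2^T = - p.2,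
              p.2 *m p.1 = 0 & hodge p.1 p.2 = - p.2]].

(* action of g in SO(5): g.(x, omega) = (g x, (g^{-1})^* omega); for g orthogonal
   (g^{-1})^* omega has matrix g Om g^T *)
Definition act {R : realType} (g : 'M[R]_5) (p : 'cV[R]_5 * 'M[R]_5) : 'cV[R]_5 * 'M[R]_5 :=
  (g *m p.1, g *m p.2 *m g^T).

(* SU(2) acting C-linearly on C^2 = R^4, (z1,z2) = (x1+ix2, x3+ix4), fixing x5:
   the element [[a, -conj b],[b, conj a]] with a = a1+i a2, b = b1+i b2. *)
Definition su2mx {R : realType} (a1 a2 b1 b2 : R) : 'M[R]_5 :=
  \matrix_(i < 5, j < 5)
    (nth 0 (nth [::] [:: [:: a1; -a2; -b1; -b2; 0];
                         [:: a2;  a1;  b2; -b1; 0];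
                         [:: b1; -b2;  a1;  a2; 0];
                         [:: b2;  b1; -a2;  a1; 0];
                         [:: 0;   0;   0;   0;  1]] i) j).

Definition SU2 {R : realType} : set 'M[R]_5 :=
  [set g | exists a1 a2 b1 b2 : R,
     a1 ^+ 2 + a2 ^+ 2 + b1 ^+ 2 + b2 ^+ 2 = 1 /\ g = su2mx a1 a2 b1 b2].

Definition su2orbit {R : realType} (p : 'cV[R]_5 * 'M[R]_5) : set ('cV[R]_5 * 'M[R]_5) :=
  [set act g p | g in SU2].

Definition pt15 {R : realType} (x1 x5 : R) : 'cV[R]_5 :=
  \col_(i < 5) nth 0 [:: x1; 0; 0; 0; x5] i.

From Pilot Require Import Defs.
From mathcomp Require Import all_boot all_order all_algebra all_classical all_reals all_analysis.
From mathcomp Require Import ring lra.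
Import numFieldNormedType.Exports.
Import Order.TTheory GRing.Theory Num.Theory.

Set Implicit Arguments.
Unset Strict Implicit.
Unset Printing Implicit Defensive.

Local Open Scope ring_scope.
Local Open Scope classical_set_scope.

(* The matrix [su2mx a1 a2 b1 b2] is left multiplication by the unit quaternion
   q = a1 + a2 i + b1 j + b2 k on R^4 = H, so SU(2) is transitive on the spheres
   of R^4 and fixes the axis R e5.  Rotating the first four coordinates of a
   base point onto the positive x1-axis gives the normal form.  Off the poles
   the orbit map q |-> q.p0 is inverted by reading off q from the base point,
   so the orbit is S^3.  At the poles +-e5 the fibre is a 3-dimensional space
   of forms; SU(2) acts on it through the double cover SU(2) -> SO(3) at e5 and
   trivially at -e5, so the orbit of a nonzero form is a 2-sphere and all other
   orbits are points.  All maps involved are polynomial of degree at most 2,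
   hence smooth. *)

Section QuadraticAlongLines.
Context {R : realType} {V W : normedModType R}.

(* An algebraic sufficient condition for smoothness, satisfied by polynomial
   maps of degree at most 2 (with [n = 2]). *)
Fixpoint quad_lines (n : nat) (f : V -> W) : Prop :=
  match n with
  | 0 => exists c : W, f = fun _ => c
  | n'.+1 => continuous f /\ exists D E : V -> V -> W,
      (forall x v (h : R), f (x + h *: v) = f x + h *: D x v + h ^+ 2 *: E x v)
      /\ forall v, quad_lines n' (fun x => D x v)
  end.

Lemma derive_quadratic_expansion (f : V -> W) x v D E :
  (forall h : R, f (x + h *: v) = f x + h *: D + h ^+ 2 *: E) ->
  derivable f x v /\ derive f x v = D.
Proof.
move=> fE.
have quotient_cvg : (fun h : R => h^-1 *: ((f \o shift x) (h *: v) - f x)) @ 0^' --> D.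
  have lin_cvg : (fun h : R => D + h *: E) @ 0^' --> D.
    have : (fun h : R => D + h *: E) @ 0^' --> D + 0 *: E.
      apply: cvg_within_filter; apply: cvgD; first exact: cvg_cst.
      by apply: cvgZ; [exact: cvg_id | exact: cvg_cst].
    by rewrite scale0r addr0.
  apply: cvg_trans lin_cvg; apply: near_eq_cvg; near=> h.
  have h0 : h != 0 by near: h; exact: nbhs_dnbhs_neq.
  rewrite /= /shift [h *: v + x]addrC fE.
  have -> : f x + h *: D + h ^+ 2 *: E - f x = h *: D + h ^+ 2 *: E.
    by rewrite addrAC [f x + _]addrC addrK.
  by rewrite scalerDr !scalerA mulVf // scale1r expr2 mulrA mulVf // mul1r.
split; first by apply/cvg_ex; exists D.
exact: cvg_lim.
Unshelve. all: by end_near. Qed.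

Lemma quad_linesS {n : nat} {f : V -> W} : quad_lines n f -> quad_lines n.+1 f.
Proof.
elim: n f => [|n IH] f /=.
  move=> [c ->]; split; first exact: cst_continuous.
  exists (fun _ _ => 0), (fun _ _ => 0); split; last by move=> v; exists 0.
  by move=> x v h; rewrite !scaler0 !addr0.
move=> [fc [D [E [fE Dq]]]]; split => //; exists D, E; split => // v.
exact: IH.
Qed.

Lemma quad_lines_derive {n : nat} {f : V -> W} : quad_lines n.+1 f ->
  [/\ continuous f, forall x v, derivable f x v &
      forall v, quad_lines n (fun x => derive f x v)].
Proof.
move=> /= [fc [D [E [fE Dq]]]]; split => // [x v|v].
  by have [] := derive_quadratic_expansion (fE x v).
suff -> : (fun x => derive f x v) = (fun x => D x v) by exact: Dq.
by apply: funext => x; have [] := derive_quadratic_expansion (fE x v).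
Qed.

Lemma quad_lines_iterD {n : nat} {f : V -> W} (vs : seq V) :
  quad_lines n f -> quad_lines n (Defs.iterD vs f).
Proof.
elim: vs => [//|v vs IH] /= fq.
by have [_ _ Dq] := quad_lines_derive (quad_linesS (IH fq)); exact: Dq.
Qed.

Lemma quad_lines_smooth_map (A : set V) {n : nat} {f : V -> W} :
  quad_lines n f -> smooth_map A f.
Proof.
move=> fq a _; exists setT; split; [exact: openT | by [] |].
exists f; split => // vs.
have [fc fd _] := quad_lines_derive (quad_linesS (quad_lines_iterD vs fq)).
by split => [x _|x v _]; [exact: fc | exact: fd].
Qed.

Lemma smooth_map_cst (A : set V) (c : W) : smooth_map A (fun _ => c).
Proof. by apply: (quad_lines_smooth_map (n := 0)); exists c. Qed.

Lemma quad_lines1_affine (f : V -> W) (L : V -> W) : continuous f ->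
  (forall x v (h : R), f (x + h *: v) = f x + h *: L v) -> quad_lines 1 f.
Proof.
move=> fc fL; split => //; exists (fun _ v => L v), (fun _ _ => 0); split.
  by move=> x v h; rewrite scaler0 addr0.
by move=> v; exists (L v).
Qed.

End QuadraticAlongLines.

Section MatrixContinuity.
Context {R : realType} {X : topologicalType}.

Lemma continuous_mx m n (f : X -> 'M[R]_(m, n)) :
  (forall i j, continuous (fun x => f x i j)) -> continuous f.
Proof.
move=> fc x A /= [P /= Pnbhs sPA]; rewrite nbhs_simpl /=.
have : \forall y \near x, forall ij : 'I_m * 'I_n, P ij.1 ij.2 (f y ij.1 ij.2).
  by apply: filter_forall => -[i j]; exact: (fc i j x _ (Pnbhs i j)).
by apply: filterS => y Py; apply: sPA => i j; exact: (Py (i, j)).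
Qed.

Lemma continuous_sum (I : Type) (s : seq I) (g : I -> X -> R^o) :
  (forall i, continuous (g i)) -> continuous (fun x => \sum_(i <- s) g i x).
Proof.
move=> gc; elim: s => [|a s IH].
  under eq_fun do rewrite big_nil; exact: cst_continuous.
under eq_fun do rewrite big_cons.
by move=> x; apply: cvgD; [exact: gc | exact: IH].
Qed.

Lemma continuous_mulmx m n p (f : X -> 'M[R]_(m, n)) (g : X -> 'M[R]_(n, p)) :
  continuous f -> continuous g -> continuous (fun x => f x *m g x).
Proof.
move=> fc gc; apply: continuous_mx => i j; under eq_fun do rewrite mxE.
apply: continuous_sum => k x.
apply: cvgM; first exact: continuous_comp (fc x) (@coord_continuous R _ _ i k (f x)).
exact: continuous_comp (gc x) (@coord_continuous R _ _ k j (g x)).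
Qed.

Lemma continuous_trmx m n (f : X -> 'M[R]_(m, n)) :
  continuous f -> continuous (fun x => (f x)^T).
Proof.
move=> fc; apply: continuous_mx => i j; under eq_fun do rewrite mxE.
by move=> x; exact: continuous_comp (fc x) (@coord_continuous R _ _ j i (f x)).
Qed.

Lemma continuous_add (U : normedModType R) (f g : X -> U) :
  continuous f -> continuous g -> continuous (fun x => f x + g x).
Proof. by move=> fc gc x; apply: cvgD; [exact: fc | exact: gc]. Qed.

Lemma continuous_scaler (U : normedModType R) (c : X -> R) (M : U) :
  continuous c -> continuous (fun x => c x *: M).
Proof. by move=> cc x; apply: cvgZ; [exact: cc | exact: cvg_cst]. Qed.

Lemma continuous_pair (U V : normedModType R) (f : X -> U) (g : X -> V) :
  continuous f -> continuous g -> continuous (fun x => (f x, g x)).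
Proof. by move=> fc gc x; apply: cvg_pair; [exact: fc | exact: gc]. Qed.

End MatrixContinuity.

Lemma pairD {R : realType} (U V : normedModType R) (a c : U) (b d : V) :
  (a, b) + (c, d) = (a + c, b + d).
Proof. by []. Qed.

Lemma pairZ {R : realType} (U V : normedModType R) (h : R) (a : U) (b : V) :
  h *: (a, b) = (h *: a, h *: b).
Proof. by []. Qed.

Lemma continuous_fst_entry {R : realType} m n p q (i : 'I_m) (j : 'I_n) :
  continuous (fun x : 'M[R]_(m, n) * 'M[R]_(p, q) => x.1 i j).
Proof.
move=> x; have fst_cont : {for x, continuous (@fst 'M[R]_(m, n) 'M[R]_(p, q))}.
  exact: cvg_fst.
exact: continuous_comp fst_cont (@coord_continuous R _ _ i j x.1).
Qed.

Lemma continuous_snd_entry {R : realType} m n p q (i : 'I_p) (j : 'I_q) :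
  continuous (fun x : 'M[R]_(m, n) * 'M[R]_(p, q) => x.2 i j).
Proof.
move=> x; have snd_cont : {for x, continuous (@snd 'M[R]_(m, n) 'M[R]_(p, q))}.
  exact: cvg_snd.
exact: continuous_comp snd_cont (@coord_continuous R _ _ i j x.2).
Qed.

Notation o0 := (@Ordinal 5 0 isT).
Notation o1 := (@Ordinal 5 1 isT).
Notation o2 := (@Ordinal 5 2 isT).
Notation o3 := (@Ordinal 5 3 isT).
Notation o4 := (@Ordinal 5 4 isT).
Notation q0 := (@Ordinal 4 0 isT).
Notation q1 := (@Ordinal 4 1 isT).
Notation q2 := (@Ordinal 4 2 isT).
Notation q3 := (@Ordinal 4 3 isT).
Notation t0 := (@Ordinal 3 0 isT).
Notation t1 := (@Ordinal 3 1 isT).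
Notation t2 := (@Ordinal 3 2 isT).

Lemma ord5_cases (i : 'I_5) : i = o0 \/ i = o1 \/ i = o2 \/ i = o3 \/ i = o4.
Proof.
case: i => [[|[|[|[|[|k]]]]] Hi] //;
  [left|right; left|do 2 right; left|do 3 right; left|do 4 right]; exact: val_inj.
Qed.

Lemma ord4_cases (i : 'I_4) : i = q0 \/ i = q1 \/ i = q2 \/ i = q3.
Proof.
case: i => [[|[|[|[|k]]]] Hi] //;
  [left|right; left|do 2 right; left|do 3 right]; exact: val_inj.
Qed.

Lemma ord3_cases (i : 'I_3) : i = t0 \/ i = t1 \/ i = t2.
Proof. by case: i => [[|[|[|k]]] Hi] //; [left|right; left|do 2 right]; exact: val_inj. Qed.

Lemma sum_ord5 {R : nmodType} (F : 'I_5 -> R) :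
  \sum_(i < 5) F i = F o0 + F o1 + F o2 + F o3 + F o4.
Proof.
rewrite !big_ord_recl big_ord0 addr0 !addrA.
by congr (_ + _ + _ + _ + _); congr F; apply: val_inj.
Qed.

Lemma sum_ord4 {R : nmodType} (F : 'I_4 -> R) :
  \sum_(i < 4) F i = F q0 + F q1 + F q2 + F q3.
Proof.
rewrite !big_ord_recl big_ord0 addr0 !addrA.
by congr (_ + _ + _ + _); congr F; apply: val_inj.
Qed.

Lemma sum_ord3 {R : nmodType} (F : 'I_3 -> R) :
  \sum_(i < 3) F i = F t0 + F t1 + F t2.
Proof.
rewrite !big_ord_recl big_ord0 addr0 !addrA.
by congr (_ + _ + _); congr F; apply: val_inj.
Qed.

Ltac mx5_cases := let i := fresh "i" in let j := fresh "j" in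
  apply/matrixP => i j; rewrite !mxE;
  case: (ord5_cases i) => [->|[->|[->|[->|->]]]];
  case: (ord5_cases j) => [->|[->|[->|[->|->]]]]; cbn [nth nat_of_ord].

Ltac cV5_cases := let i := fresh "i" in let j := fresh "j" in
  apply/matrixP => i j; rewrite !mxE ?(ord1 j);
  case: (ord5_cases i) => [->|[->|[->|[->|->]]]]; cbn [nth nat_of_ord].

Ltac cV4_cases := let i := fresh "i" in let j := fresh "j" in
  apply/matrixP => i j; rewrite !mxE ?(ord1 j);
  case: (ord4_cases i) => [->|[->|[->|->]]]; cbn [nth nat_of_ord].

Ltac cV3_cases := let i := fresh "i" in let j := fresh "j" in
  apply/matrixP => i j; rewrite !mxE ?(ord1 j);
  case: (ord3_cases i) => [->|[->|->]]; cbn [nth nat_of_ord].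

(* The anti-self-dual forms at the poles [pt15 0 s], s = 1 or -1, written in
   terms of their first row. *)
Definition asd_mx {R : ringType} (s w1 w2 w3 : R) : 'M[R]_5 :=
  \matrix_(i < 5, j < 5)
    (nth 0 (nth [::] [:: [:: 0; w1; w2; w3; 0];
                         [:: -w1; 0; -(s*w3); s*w2; 0];
                         [:: -w2; s*w3; 0; -(s*w1); 0];
                         [:: -w3; -(s*w2); s*w1; 0; 0];
                         [:: 0; 0; 0; 0; 0]] i) j).

(* The image of [su2mx a1 a2 b1 b2] in SO(3), acting on (w1, w2, w3). *)
Definition rot1 {R : ringType} (a1 a2 b1 b2 w1 w2 w3 : R) :=
  (a1^+2+a2^+2-b1^+2-b2^+2)*w1 + (2*a2*b1+2*a1*b2)*w2 + (2*a2*b2 - 2*a1*b1)*w3.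
Definition rot2 {R : ringType} (a1 a2 b1 b2 w1 w2 w3 : R) :=
  (2*a2*b1 - 2*a1*b2)*w1 + (a1^+2-a2^+2+b1^+2-b2^+2)*w2 + (2*b1*b2+2*a1*a2)*w3.
Definition rot3 {R : ringType} (a1 a2 b1 b2 w1 w2 w3 : R) :=
  (2*a2*b2+2*a1*b1)*w1 + (2*b1*b2 - 2*a1*a2)*w2 + (a1^+2-a2^+2-b1^+2+b2^+2)*w3.

Section SU2Action.
Context {R : realType}.

Lemma su2_mulmx_col (a1 a2 b1 b2 : R) (v : 'cV[R]_5) :
  su2mx a1 a2 b1 b2 *m v = \col_(i < 5) nth 0
    [:: a1 * v o0 0 - a2 * v o1 0 - b1 * v o2 0 - b2 * v o3 0;
        a2 * v o0 0 + a1 * v o1 0 + b2 * v o2 0 - b1 * v o3 0;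
        b1 * v o0 0 - b2 * v o1 0 + a1 * v o2 0 + a2 * v o3 0;
        b2 * v o0 0 + b1 * v o1 0 - a2 * v o2 0 + a1 * v o3 0;
        v o4 0] i.
Proof. cV5_cases; rewrite !sum_ord5 !mxE; cbn [nth nat_of_ord]; ring. Qed.

Lemma su2_mul_pt15 (a1 a2 b1 b2 x1 x5 : R) :
  su2mx a1 a2 b1 b2 *m pt15 x1 x5 =
  \col_(i < 5) nth 0 [:: x1 * a1; x1 * a2; x1 * b1; x1 * b2; x5] i.
Proof. rewrite su2_mulmx_col; cV5_cases; ring. Qed.

Lemma su2_fixes_axis (g : 'M[R]_5) (x5 : R) : SU2 g -> g *m pt15 0 x5 = pt15 0 x5.
Proof. by move=> [a1 [a2 [b1 [b2 [_ ->]]]]]; rewrite su2_mul_pt15; cV5_cases; ring. Qed.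

Lemma su2_conj_asd_north (a1 a2 b1 b2 w1 w2 w3 : R) :
  su2mx a1 a2 b1 b2 *m asd_mx 1 w1 w2 w3 *m (su2mx a1 a2 b1 b2)^T =
  asd_mx 1 (rot1 a1 a2 b1 b2 w1 w2 w3) (rot2 a1 a2 b1 b2 w1 w2 w3)
           (rot3 a1 a2 b1 b2 w1 w2 w3).
Proof.
rewrite /rot1 /rot2 /rot3.
apply/matrixP => i j; rewrite !mxE !sum_ord5 !mxE !sum_ord5 !mxE.
by case: (ord5_cases i) => [->|[->|[->|[->|->]]]];
  case: (ord5_cases j) => [->|[->|[->|[->|->]]]]; cbn [nth nat_of_ord]; ring.
Qed.

Lemma su2_conj_asd_south (a1 a2 b1 b2 w1 w2 w3 : R) :
  su2mx a1 a2 b1 b2 *m asd_mx (-1) w1 w2 w3 *m (su2mx a1 a2 b1 b2)^T =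
  (a1^+2 + a2^+2 + b1^+2 + b2^+2) *: asd_mx (-1) w1 w2 w3.
Proof.
apply/matrixP => i j; rewrite !mxE !sum_ord5 !mxE !sum_ord5 !mxE.
by case: (ord5_cases i) => [->|[->|[->|[->|->]]]];
  case: (ord5_cases j) => [->|[->|[->|[->|->]]]]; cbn [nth nat_of_ord]; ring.
Qed.

Lemma su2_move_to_meridian (p : 'cV[R]_5 * 'M[R]_5) :
  exists g, SU2 g /\ exists x1 x5 : R, 0 <= x1 /\ (act g p).1 = pt15 x1 x5.
Proof.
set y0 := p.1 o0 0; set y1 := p.1 o1 0; set y2 := p.1 o2 0; set y3 := p.1 o3 0.
set r2 := y0 ^+ 2 + y1 ^+ 2 + y2 ^+ 2 + y3 ^+ 2.
have r2_ge0 : 0 <= r2 by rewrite /r2; nra.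
have [r2_0|r2_neq0] := eqVneq r2 0.
  have [z0 z1 z2 z3] : [/\ y0 = 0, y1 = 0, y2 = 0 & y3 = 0].
    by move: r2_0; rewrite /r2 => r2_0; split; nra.
  exists (su2mx 1 0 0 0); split; first by exists 1, 0, 0, 0; split => //; ring.
  exists 0, (p.1 o4 0); split => //=.
  by rewrite su2_mulmx_col; cV5_cases; rewrite -/y0 -/y1 -/y2 -/y3 ?z0 ?z1 ?z2 ?z3; ring.
set r := Num.sqrt r2.
have r_gt0 : 0 < r by rewrite sqrtr_gt0 lt_def r2_neq0 r2_ge0.
have rr : r ^+ 2 = r2 by rewrite sqr_sqrtr.
have r_neq0 : r != 0 by rewrite gt_eqF.
(* the conjugate of the unit quaternion (y0 + y1 i + y2 j + y3 k) / r *)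
exists (su2mx (y0 / r) (- (y1 / r)) (- (y2 / r)) (- (y3 / r))); split.
  exists (y0 / r), (- (y1 / r)), (- (y2 / r)), (- (y3 / r)); split => //.
  transitivity (r2 / r ^+ 2); first by rewrite /r2; field.
  by rewrite rr divff.
exists r, (p.1 o4 0); split; first exact: ltW.
rewrite /= su2_mulmx_col; cV5_cases; rewrite -/y0 -/y1 -/y2 -/y3 //; try by field.
transitivity (r2 / r); first by rewrite /r2; field.
by rewrite -rr expr2 mulfK.
Qed.

End SU2Action.

Section HodgeAtPoles.
Context {R : realType}.

Lemma ord_eqE n (a b : 'I_n) : (a == b) = (nat_of_ord a == nat_of_ord b)%N.
Proof. by []. Qed.

Ltac eps_det_step :=
  rewrite (expand_det_row _ ord0) !big_ord_recr big_ord0 /= !mxE /= ?ord_eqE /=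
    ?mulr0n ?mulr1n ?mul0r ?add0r ?addr0 ?mul1r /cofactor.
Ltac eps_value := rewrite /eps5; do 4 eps_det_step;
  rewrite /cofactor det_mx11 !mxE /= ?ord_eqE /= ?mulr0n ?mulr1n ?exprS ?expr0 ?mulr1
    ?mulN1r ?opprK ?mul1r.

Lemma eps5_40123 : @eps5 R o4 o0 o1 o2 o3 = 1. Proof. by eps_value. Qed.
Lemma eps5_40132 : @eps5 R o4 o0 o1 o3 o2 = -1. Proof. by eps_value. Qed.
Lemma eps5_40213 : @eps5 R o4 o0 o2 o1 o3 = -1. Proof. by eps_value. Qed.
Lemma eps5_40231 : @eps5 R o4 o0 o2 o3 o1 = 1. Proof. by eps_value. Qed.
Lemma eps5_40312 : @eps5 R o4 o0 o3 o1 o2 = 1. Proof. by eps_value. Qed.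
Lemma eps5_40321 : @eps5 R o4 o0 o3 o2 o1 = -1. Proof. by eps_value. Qed.

Lemma eps5_not_uniq (m i j k l : 'I_5) :
  ~~ uniq [:: m; i; j; k; l] -> @eps5 R m i j k l = 0.
Proof.
move/(uniqPn ord0) => [a [b [ab b5 nth_ab]]].
have a5 : (a < 5)%N by apply: ltn_trans b5.
apply: (@determinant_alternate _ _ _ (Ordinal a5) (Ordinal b5)).
  by rewrite ord_eqE /= neq_ltn ab.
by move=> c; rewrite !mxE /= nth_ab.
Qed.

Lemma hodge_pole (s : R) (Om : 'M[R]_5) i j :
  hodge (pt15 0 s) Om i j =
  2^-1 * (s * \sum_k \sum_l (if uniq [:: o4; i; j; k; l]
                             then eps5 o4 i j k l * Om k l else 0)).
Proof.
rewrite mxE; congr (_ * _).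
have pull m : \sum_k \sum_l eps5 m i j k l * pt15 0 s m 0 * Om k l =
              pt15 0 s m 0 * \sum_k \sum_l eps5 m i j k l * Om k l.
  rewrite mulr_sumr; apply: eq_bigr => k _; rewrite mulr_sumr.
  by apply: eq_bigr => l _; ring.
rewrite (eq_bigr _ (fun m _ => pull m)) sum_ord5 !mxE; cbn [nth nat_of_ord].
rewrite !mul0r !add0r; congr (_ * _).
apply: eq_bigr => k _; apply: eq_bigr => l _.
by case: ifP => // /negbT /eps5_not_uniq ->; rewrite mul0r.
Qed.

Lemma hodge_pole01 (s : R) Om :
  hodge (pt15 0 s) Om o0 o1 = 2^-1 * (s * (Om o2 o3 - Om o3 o2)).
Proof. by rewrite hodge_pole !sum_ord5 /= eps5_40123 eps5_40132; ring. Qed.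

Lemma hodge_pole02 (s : R) Om :
  hodge (pt15 0 s) Om o0 o2 = 2^-1 * (s * (Om o3 o1 - Om o1 o3)).
Proof. by rewrite hodge_pole !sum_ord5 /= eps5_40213 eps5_40231; ring. Qed.

Lemma hodge_pole03 (s : R) Om :
  hodge (pt15 0 s) Om o0 o3 = 2^-1 * (s * (Om o1 o2 - Om o2 o1)).
Proof. by rewrite hodge_pole !sum_ord5 /= eps5_40312 eps5_40321; ring. Qed.

Lemma ASD_bundle_pole_form (s : R) (Om : 'M[R]_5) : s = 1 \/ s = -1 ->
  ASD_bundle (pt15 0 s, Om) -> Om = asd_mx s (Om o0 o1) (Om o0 o2) (Om o0 o3).
Proof.
move=> s_pm [/= _ Om_skew Om_x Om_asd].
have sk i j : Om j i = - Om i j by move/matrixP: Om_skew => /(_ i j); rewrite !mxE.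
have c4 i : Om i o4 = 0.
  move/matrixP: Om_x => /(_ i 0); rewrite !mxE sum_ord5 !mxE; cbn [nth nat_of_ord].
  rewrite !mulr0 !add0r => /eqP; rewrite mulf_eq0 => /orP [/eqP //|/eqP s0].
  by exfalso; case: s_pm s0 => -> /eqP; rewrite ?oppr_eq0 oner_eq0.
have d i : Om i i = 0.
  by move/eqP: (sk i i); rewrite -subr_eq0 opprK -mulr2n mulrn_eq0 /= => /eqP.
have h01 := hodge_pole01 s Om; have h02 := hodge_pole02 s Om.
have h03 := hodge_pole03 s Om.
rewrite Om_asd !mxE in h01 h02 h03.
have := sk o1 o2; have := sk o1 o3; have := sk o2 o3.
have := sk o0 o1; have := sk o0 o2; have := sk o0 o3.
have := c4 o0; have := c4 o1; have := c4 o2; have := c4 o3; have := c4 o4.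
have := sk o4 o0; have := sk o4 o1; have := sk o4 o2; have := sk o4 o3.
have := d o0; have := d o1; have := d o2; have := d o3.
move: h01 h02 h03.
by case: s_pm => -> h01 h02 h03 *; mx5_cases; lra.
Qed.

Lemma ASD_bundle_pt15_norm (x1 x5 : R) (p : 'cV[R]_5 * 'M[R]_5) :
  ASD_bundle p -> p.1 = pt15 x1 x5 -> x1 ^+ 2 + x5 ^+ 2 = 1.
Proof.
move=> [p_norm _ _ _] p1E; rewrite p1E sum_ord5 !mxE in p_norm.
by cbn [nth nat_of_ord] in p_norm; rewrite -p_norm; ring.
Qed.

Lemma ASD_bundle_pole (x1 s : R) (p : 'cV[R]_5 * 'M[R]_5) :
  ASD_bundle p -> p.1 = pt15 x1 s -> s = 1 \/ s = -1 ->
  p = (pt15 0 s, asd_mx s (p.2 o0 o1) (p.2 o0 o2) (p.2 o0 o3)).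
Proof.
move=> p_ASD p1E s_pm.
have x1_0 : x1 = 0.
  have := ASD_bundle_pt15_norm p_ASD p1E.
  by case: s_pm => -> norm1; apply/eqP; rewrite -sqrf_eq0; apply/eqP; lra.
have pE : p = (pt15 0 s, p.2) by rewrite -x1_0 -p1E -surjective_pairing.
have p_pole : ASD_bundle (pt15 0 s, p.2) by rewrite -pE.
by rewrite {1}pE; congr (_, _); exact: ASD_bundle_pole_form s_pm p_pole.
Qed.

End HodgeAtPoles.

Section Orbits.
Context {R : realType}.

Definition su2vec (u : 'cV[R]_4) := su2mx (u q0 0) (u q1 0) (u q2 0) (u q3 0).

Lemma su2vec_affine (u v : 'cV[R]_4) (h : R) :
  su2vec (u + h *: v) = su2vec u + h *: (su2vec v - su2vec 0).
Proof. by rewrite /su2vec; mx5_cases; ring. Qed.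

Lemma continuous_su2vec : continuous su2vec.
Proof.
pose K : 'M[R]_5 := su2mx 0 0 0 0.
have -> : su2vec = fun u => u q0 0 *: (su2mx 1 0 0 0 - K) + u q1 0 *: (su2mx 0 1 0 0 - K)
   + u q2 0 *: (su2mx 0 0 1 0 - K) + u q3 0 *: (su2mx 0 0 0 1 - K) + K.
  by apply: funext => u; rewrite /su2vec /K; mx5_cases; ring.
by repeat apply: continuous_add; try exact: cst_continuous;
  apply: continuous_scaler; exact: coord_continuous.
Qed.

Lemma act_addZ (M A : 'M[R]_5) (h : R) (p : 'cV[R]_5 * 'M[R]_5) :
  act (M + h *: A) p = act M p + h *: (A *m p.1, A *m p.2 *m M^T + M *m p.2 *m A^T)
     + h ^+ 2 *: (0, A *m p.2 *m A^T).
Proof.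
rewrite /act !pairZ !pairD /=; congr (_, _).
  by rewrite mulmxDl -scalemxAl scaler0 addr0.
rewrite linearD linearZ /= !mulmxDl !mulmxDr -!scalemxAl -!scalemxAr.
by rewrite scalerDr !scalerA -expr2 !addrA [in RHS]addrAC.
Qed.

Lemma su2_orbit_map_quad_lines (p : 'cV[R]_5 * 'M[R]_5) :
  quad_lines 2 (fun u : 'cV[R]_4 => act (su2vec u) p).
Proof.
pose A v := su2vec v - su2vec 0.
have conj_cont (L : 'cV[R]_4 -> 'M[R]_5) (M : 'M[R]_5) :
    continuous L -> continuous (fun u => L u *m M *m (su2vec u)^T).
  move=> Lc; apply: continuous_mulmx; last exact: continuous_trmx continuous_su2vec.
  by apply: continuous_mulmx => //; exact: cst_continuous.
split.
  apply: continuous_pair; last exact: conj_cont continuous_su2vec.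
  by apply: continuous_mulmx; [exact: continuous_su2vec | exact: cst_continuous].
exists (fun u v => (A v *m p.1, A v *m p.2 *m (su2vec u)^T + su2vec u *m p.2 *m (A v)^T)).
exists (fun u v => (0, A v *m p.2 *m (A v)^T)).
split; first by move=> u v h; rewrite su2vec_affine act_addZ.
move=> v; split.
  apply: continuous_pair; first exact: cst_continuous.
  apply: continuous_add; first by apply: conj_cont; exact: cst_continuous.
  apply: continuous_mulmx; last exact: cst_continuous.
  by apply: continuous_mulmx; [exact: continuous_su2vec | exact: cst_continuous].
exists (fun u w => (0, A v *m p.2 *m (A w)^T + A w *m p.2 *m (A v)^T)).
exists (fun u w => 0).
split; last by move=> w; exists (0, A v *m p.2 *m (A w)^T + A w *m p.2 *m (A v)^T).
move=> u w h; rewrite su2vec_affine -/(A w) scaler0 addr0 !pairZ !pairD scaler0 addr0.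
congr (_, _); move: (A v) (A w) (su2vec u) => a b S.
rewrite linearD linearZ /= mulmxDr -scalemxAr !mulmxDl -!scalemxAl scalerDr.
by rewrite addrACA.
Qed.

Definition base_coords (x1 : R) (p : 'cV[R]_5 * 'M[R]_5) : 'cV[R]_4 :=
  \col_(i < 4) (x1^-1 * p.1 (nth o0 [:: o0; o1; o2; o3] i) 0).

Lemma base_coords_quad_lines (x1 : R) : quad_lines 1 (base_coords x1).
Proof.
apply: (quad_lines1_affine (L := base_coords x1)).
  apply: continuous_mx => i j; rewrite /base_coords; under eq_fun do rewrite mxE.
  by move=> p; apply: cvgM; [exact: cvg_cst | exact: continuous_fst_entry].
by move=> p q h; apply/matrixP => i j; rewrite !mxE /=; ring.
Qed.

Lemma su2orbit_sphere3 (x1 x5 : R) (p : 'cV[R]_5 * 'M[R]_5) :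
  x1 != 0 -> p.1 = pt15 x1 x5 -> diffeomorphic (su2orbit p) (@sphere R 4).
Proof.
move=> x1_neq0 p1E.
have coordsE a1 a2 b1 b2 : base_coords x1 (act (su2mx a1 a2 b1 b2) p) =
    \col_(i < 4) nth 0 [:: a1; a2; b1; b2] i.
  by rewrite /act /= p1E su2_mul_pt15; cV4_cases; field.
exists (base_coords x1), (fun u => act (su2vec u) p); split.
- move=> _ [_ [a1 [a2 [b1 [b2 [norm1 ->]]]]] <-].
  by rewrite coordsE /sphere /= sum_ord4 !mxE; cbn [nth nat_of_ord].
- move=> u u_S3; exists (su2vec u) => //.
  exists (u q0 0), (u q1 0), (u q2 0), (u q3 0); split => //.
  by move: u_S3; rewrite /sphere /= sum_ord4.
- by move=> _ [_ [a1 [a2 [b1 [b2 [_ ->]]]]] <-]; rewrite coordsE /su2vec !mxE.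
- by move=> u _; rewrite /su2vec coordsE; cV4_cases.
- split; first exact: quad_lines_smooth_map _ (base_coords_quad_lines x1).
  exact: quad_lines_smooth_map _ (su2_orbit_map_quad_lines p).
Qed.

End Orbits.

Section RotationsOfForms.
Context {R : realType}.

(* Components of the quaternion product pc; [rot] is multiplicative for it. *)
Definition qmul1 (p1 p2 p3 p4 c1 c2 c3 c4 : R) := p1*c1 - p2*c2 - p3*c3 - p4*c4.
Definition qmul2 (p1 p2 p3 p4 c1 c2 c3 c4 : R) := p2*c1 + p1*c2 + p4*c3 - p3*c4.
Definition qmul3 (p1 p2 p3 p4 c1 c2 c3 c4 : R) := p3*c1 - p4*c2 + p1*c3 + p2*c4.
Definition qmul4 (p1 p2 p3 p4 c1 c2 c3 c4 : R) := p4*c1 + p3*c2 - p2*c3 + p1*c4.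

Lemma qmul_conj_norm (q1 q2 q3 q4 p1 p2 p3 p4 : R) :
  qmul1 q1 q2 q3 q4 p1 (-p2) (-p3) (-p4) ^+ 2 + qmul2 q1 q2 q3 q4 p1 (-p2) (-p3) (-p4) ^+ 2
  + qmul3 q1 q2 q3 q4 p1 (-p2) (-p3) (-p4) ^+ 2 + qmul4 q1 q2 q3 q4 p1 (-p2) (-p3) (-p4) ^+ 2
  = (q1^+2 + q2^+2 + q3^+2 + q4^+2) * (p1^+2 + p2^+2 + p3^+2 + p4^+2).
Proof. by rewrite /qmul1 /qmul2 /qmul3 /qmul4; ring. Qed.

Lemma rot_qmul_conj (q1 q2 q3 q4 p1 p2 p3 p4 : R) :
  let u1 := qmul1 q1 q2 q3 q4 p1 (-p2) (-p3) (-p4) in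
  let u2 := qmul2 q1 q2 q3 q4 p1 (-p2) (-p3) (-p4) in
  let u3 := qmul3 q1 q2 q3 q4 p1 (-p2) (-p3) (-p4) in
  let u4 := qmul4 q1 q2 q3 q4 p1 (-p2) (-p3) (-p4) in
  let n := p1^+2 + p2^+2 + p3^+2 + p4^+2 in
  let w1 := rot1 p1 p2 p3 p4 1 0 0 in
  let w2 := rot2 p1 p2 p3 p4 1 0 0 in
  let w3 := rot3 p1 p2 p3 p4 1 0 0 in
  [/\ rot1 u1 u2 u3 u4 w1 w2 w3 = n ^+ 2 * rot1 q1 q2 q3 q4 1 0 0,
      rot2 u1 u2 u3 u4 w1 w2 w3 = n ^+ 2 * rot2 q1 q2 q3 q4 1 0 0 &
      rot3 u1 u2 u3 u4 w1 w2 w3 = n ^+ 2 * rot3 q1 q2 q3 q4 1 0 0].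
Proof. by rewrite /qmul1 /qmul2 /qmul3 /qmul4 /rot1 /rot2 /rot3 /=; split; ring. Qed.

Lemma rotZ (a1 a2 b1 b2 l w1 w2 w3 : R) :
  [/\ rot1 a1 a2 b1 b2 (l*w1) (l*w2) (l*w3) = l * rot1 a1 a2 b1 b2 w1 w2 w3,
      rot2 a1 a2 b1 b2 (l*w1) (l*w2) (l*w3) = l * rot2 a1 a2 b1 b2 w1 w2 w3 &
      rot3 a1 a2 b1 b2 (l*w1) (l*w2) (l*w3) = l * rot3 a1 a2 b1 b2 w1 w2 w3].
Proof. by rewrite /rot1 /rot2 /rot3; split; ring. Qed.

Lemma rot_norm (a1 a2 b1 b2 w1 w2 w3 : R) :
  rot1 a1 a2 b1 b2 w1 w2 w3 ^+ 2 + rot2 a1 a2 b1 b2 w1 w2 w3 ^+ 2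
  + rot3 a1 a2 b1 b2 w1 w2 w3 ^+ 2
  = (a1^+2 + a2^+2 + b1^+2 + b2^+2) ^+ 2 * (w1^+2 + w2^+2 + w3^+2).
Proof. by rewrite /rot1 /rot2 /rot3; ring. Qed.

Lemma rot_e1_onto (c1 c2 c3 : R) : c1^+2 + c2^+2 + c3^+2 = 1 ->
  exists a1 a2 b1 b2 : R, a1^+2 + a2^+2 + b1^+2 + b2^+2 = 1 /\
    [/\ rot1 a1 a2 b1 b2 1 0 0 = c1, rot2 a1 a2 b1 b2 1 0 0 = c2 &
        rot3 a1 a2 b1 b2 1 0 0 = c3].
Proof.
move=> c_norm1.
have [c1E|c1_neq] := eqVneq c1 (-1).
  have [c2_0 c3_0] : c2 = 0 /\ c3 = 0 by move: c_norm1; rewrite c1E; split; nra.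
  by exists 0, 0, 1, 0; rewrite /rot1 /rot2 /rot3 c1E c2_0 c3_0; split; [|split]; ring.
have c1_gt : -1 < c1 by rewrite lt_def c1_neq /=; move: c_norm1; nra.
(* half-angle construction: the rotation about e1 x c taking e1 to c *)
set s := Num.sqrt ((1 + c1) / 2).
have s_gt0 : 0 < s by rewrite sqrtr_gt0; apply: divr_gt0 => //; lra.
have ss : s ^+ 2 = (1 + c1) / 2 by rewrite sqr_sqrtr //; apply: divr_ge0 => //; lra.
have s_neq0 : s != 0 by rewrite gt_eqF.
have c23 : c2^+2 + c3^+2 = (1 - c1) * (1 + c1) by move: c_norm1; nra.
have c1_neq' : 1 + c1 != 0 by rewrite gt_eqF //; lra.
exists s, 0, (c3 / (2 * s)), (- (c2 / (2 * s))); rewrite /rot1 /rot2 /rot3.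
split; last split.
- transitivity (s^+2 + (c2^+2 + c3^+2) / (4 * s^+2)); first by field.
  by rewrite ss c23; field.
- transitivity (s^+2 - (c2^+2 + c3^+2) / (4 * s^+2)); first by field.
  by rewrite ss c23; field.
- by field.
- by field.
Qed.

Lemma rot_onto (w1 w2 w3 c1 c2 c3 lam : R) : 0 < lam ->
  w1^+2 + w2^+2 + w3^+2 = lam^+2 -> c1^+2 + c2^+2 + c3^+2 = 1 ->
  exists a1 a2 b1 b2 : R, a1^+2 + a2^+2 + b1^+2 + b2^+2 = 1 /\
    [/\ rot1 a1 a2 b1 b2 w1 w2 w3 = lam * c1, rot2 a1 a2 b1 b2 w1 w2 w3 = lam * c2 &
        rot3 a1 a2 b1 b2 w1 w2 w3 = lam * c3].
Proof.
move=> lam_gt0 w_norm c_norm.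
have lam_neq0 : lam != 0 by rewrite gt_eqF.
set v1 := w1 / lam; set v2 := w2 / lam; set v3 := w3 / lam.
have [e1 e2 e3] : [/\ w1 = lam * v1, w2 = lam * v2 & w3 = lam * v3].
  by split; rewrite /v1 /v2 /v3; field.
have v_norm : v1^+2 + v2^+2 + v3^+2 = 1.
  rewrite /v1 /v2 /v3; transitivity ((w1^+2 + w2^+2 + w3^+2) / lam^+2); first by field.
  by rewrite w_norm divff // expf_neq0.
clearbody v1 v2 v3; subst w1 w2 w3.
have [p1 [p2 [p3 [p4 [p_norm [r1 r2 r3]]]]]] := rot_e1_onto v_norm.
have [q1 [q2 [q3 [q4 [q_norm [s1 s2 s3]]]]]] := rot_e1_onto c_norm.
have [m1 m2 m3] := rot_qmul_conj q1 q2 q3 q4 p1 p2 p3 p4.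
move: m1 m2 m3; rewrite /= r1 r2 r3 p_norm expr1n !mul1r s1 s2 s3 => m1 m2 m3.
set u1 := qmul1 q1 q2 q3 q4 p1 (-p2) (-p3) (-p4) in m1 m2 m3 *.
set u2 := qmul2 q1 q2 q3 q4 p1 (-p2) (-p3) (-p4) in m1 m2 m3 *.
set u3 := qmul3 q1 q2 q3 q4 p1 (-p2) (-p3) (-p4) in m1 m2 m3 *.
set u4 := qmul4 q1 q2 q3 q4 p1 (-p2) (-p3) (-p4) in m1 m2 m3 *.
exists u1, u2, u3, u4; split; first by rewrite qmul_conj_norm q_norm p_norm mulr1.
by have [-> -> ->] := rotZ u1 u2 u3 u4 lam v1 v2 v3; rewrite m1 m2 m3.
Qed.

Lemma asd_mx_norm_gt0 (s w1 w2 w3 : R) :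
  asd_mx s w1 w2 w3 != 0 -> 0 < w1^+2 + w2^+2 + w3^+2.
Proof.
move=> asd_neq0; rewrite lt_def; apply/andP; split; last by nra.
apply: contra_neq asd_neq0 => w_norm.
have [-> -> ->] : [/\ w1 = 0, w2 = 0 & w3 = 0] by split; nra.
by mx5_cases; ring.
Qed.

Lemma su2_act_north (a1 a2 b1 b2 w1 w2 w3 : R) :
  act (su2mx a1 a2 b1 b2) (pt15 0 1, asd_mx 1 w1 w2 w3) =
  (pt15 0 1, asd_mx 1 (rot1 a1 a2 b1 b2 w1 w2 w3) (rot2 a1 a2 b1 b2 w1 w2 w3)
                      (rot3 a1 a2 b1 b2 w1 w2 w3)).
Proof.
rewrite /act /= su2_conj_asd_north su2_mul_pt15; congr (_, _).
by cV5_cases; ring.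
Qed.

Definition form_coords (lam : R) (p : 'cV[R]_5 * 'M[R]_5) : 'cV[R]_3 :=
  \col_(i < 3) (lam^-1 * p.2 o0 (nth o0 [:: o1; o2; o3] i)).

Definition north_form (lam : R) (c : 'cV[R]_3) : 'cV[R]_5 * 'M[R]_5 :=
  (pt15 0 1, asd_mx 1 (lam * c t0 0) (lam * c t1 0) (lam * c t2 0)).

Lemma form_coords_quad_lines (lam : R) : quad_lines 1 (form_coords lam).
Proof.
apply: (quad_lines1_affine (L := form_coords lam)).
  apply: continuous_mx => i j; rewrite /form_coords; under eq_fun do rewrite mxE.
  by move=> p; apply: cvgM; [exact: cvg_cst | exact: continuous_snd_entry].
by move=> p q h; apply/matrixP => i j; rewrite !mxE /=; ring.
Qed.

Lemma north_form_quad_lines (lam : R) : quad_lines 1 (north_form lam).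
Proof.
pose L (v : 'cV[R]_3) : 'cV[R]_5 * 'M[R]_5 :=
  (0, asd_mx 1 (lam * v t0 0) (lam * v t1 0) (lam * v t2 0)).
apply: (quad_lines1_affine (L := L)); last first.
  move=> c v h; rewrite /north_form /L pairZ pairD scaler0 addr0; congr (_, _).
  by mx5_cases; ring.
apply: continuous_pair; first exact: cst_continuous.
have -> : (fun c : 'cV[R]_3 => asd_mx 1 (lam * c t0 0) (lam * c t1 0) (lam * c t2 0)) =
    fun c => c t0 0 *: (lam *: asd_mx 1 1 0 0) + c t1 0 *: (lam *: asd_mx 1 0 1 0)
             + c t2 0 *: (lam *: asd_mx 1 0 0 1).
  by apply: funext => c; mx5_cases; ring.
by repeat apply: continuous_add; apply: continuous_scaler; exact: coord_continuous.
Qed.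

Lemma su2orbit_north_sphere2 (w1 w2 w3 : R) : 0 < w1^+2 + w2^+2 + w3^+2 ->
  diffeomorphic (su2orbit (pt15 0 1, asd_mx 1 w1 w2 w3)) (@sphere R 3).
Proof.
move=> lam2_gt0; set lam2 := w1^+2 + w2^+2 + w3^+2 in lam2_gt0.
set lam := Num.sqrt lam2.
have lam_gt0 : 0 < lam by rewrite sqrtr_gt0.
have lam_sq : lam ^+ 2 = lam2 by rewrite sqr_sqrtr // ltW.
have lam_neq0 : lam != 0 by rewrite gt_eqF.
have coordsE a1 a2 b1 b2 :
    form_coords lam (act (su2mx a1 a2 b1 b2) (pt15 0 1, asd_mx 1 w1 w2 w3)) =
    \col_(i < 3) (lam^-1 * nth 0 [:: rot1 a1 a2 b1 b2 w1 w2 w3;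
                    rot2 a1 a2 b1 b2 w1 w2 w3; rot3 a1 a2 b1 b2 w1 w2 w3] i).
  by rewrite su2_act_north; cV3_cases.
exists (form_coords lam), (north_form lam); split.
- move=> _ [_ [a1 [a2 [b1 [b2 [norm1 ->]]]]] <-].
  rewrite coordsE /sphere /= sum_ord3 !mxE; cbn [nth nat_of_ord].
  transitivity ((rot1 a1 a2 b1 b2 w1 w2 w3 ^+ 2 + rot2 a1 a2 b1 b2 w1 w2 w3 ^+ 2
                 + rot3 a1 a2 b1 b2 w1 w2 w3 ^+ 2) / lam ^+ 2); first by field.
  by rewrite rot_norm norm1 expr1n mul1r -/lam2 -lam_sq divff // expf_neq0.
- move=> c; rewrite /sphere /= sum_ord3 => c_norm.
  have [a1 [a2 [b1 [b2 [norm1 [r1 r2 r3]]]]]] :=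
    rot_onto (w1 := w1) (w2 := w2) (w3 := w3) lam_gt0 (esym lam_sq) c_norm.
  exists (su2mx a1 a2 b1 b2); first by exists a1, a2, b1, b2.
  by rewrite su2_act_north r1 r2 r3.
- move=> _ [_ [a1 [a2 [b1 [b2 [_ ->]]]]] <-].
  rewrite coordsE su2_act_north /north_form !mxE; cbn [nth nat_of_ord].
  by rewrite !(mulVKf lam_neq0).
- by move=> c _; rewrite /north_form /form_coords; cV3_cases; rewrite mulKf.
- split; first exact: quad_lines_smooth_map _ (form_coords_quad_lines lam).
  exact: quad_lines_smooth_map _ (north_form_quad_lines lam).
Qed.

End RotationsOfForms.

Section FixedPoints.
Context {R : realType}.

Lemma su2orbit_fixed (p : 'cV[R]_5 * 'M[R]_5) :
  (forall g, SU2 g -> act g p = p) -> diffeomorphic (su2orbit p) (@point_space R).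
Proof.
have id_SU2 : SU2 (su2mx 1 0 0 0 : 'M[R]_5) by exists 1, 0, 0, 0; split => //; ring.
move=> p_fixed; exists (fun _ => 0), (fun _ => p); split.
- by [].
- by move=> _ _; exists (su2mx 1 0 0 0) => //; exact: p_fixed.
- by move=> _ [g g_SU2 <-]; rewrite p_fixed.
- by move=> b; rewrite /point_space /= => ->.
- by split; apply: smooth_map_cst.
Qed.

Lemma su2_fixes_north0 (g : 'M[R]_5) : SU2 g -> act g (pt15 0 1, 0) = (pt15 0 1, 0).
Proof. by move=> g_SU2; rewrite /act /= su2_fixes_axis // mulmx0 mul0mx. Qed.

Lemma su2_fixes_south (g : 'M[R]_5) (w1 w2 w3 : R) : SU2 g ->
  act g (pt15 0 (-1), asd_mx (-1) w1 w2 w3) = (pt15 0 (-1), asd_mx (-1) w1 w2 w3).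
Proof.
move=> g_SU2; rewrite /act /= su2_fixes_axis //.
by case: g_SU2 => [a1 [a2 [b1 [b2 [norm1 ->]]]]]; rewrite su2_conj_asd_south norm1 scale1r.
Qed.

End FixedPoints.

Theorem lemma4p6 (R : realType) :
  (forall p : 'cV[R]_5 * 'M[R]_5, ASD_bundle p ->
     exists g, SU2 g /\ exists x1 x5 : R, 0 <= x1 /\ (act g p).1 = pt15 x1 x5) /\
  (forall (x1 x5 : R) (p0 : 'cV[R]_5 * 'M[R]_5),
     ASD_bundle p0 -> 0 <= x1 -> p0.1 = pt15 x1 x5 ->
     [/\ (x5 != 1 -> x5 != -1 -> diffeomorphic (su2orbit p0) (@sphere R 4)),
         (x5 = 1 -> p0.2 != 0 -> diffeomorphic (su2orbit p0) (@sphere R 3)) &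
         ((x5 = 1 /\ p0.2 = 0) \/ x5 = -1 ->
            diffeomorphic (su2orbit p0) (@point_space R))]).
Proof.
split=> [p _|x1 x5 p0 p0_ASD _ p01E]; first exact: su2_move_to_meridian.
have pole_form := ASD_bundle_pole p0_ASD p01E.
split.
- move=> x5_neq1 x5_neqN1; apply: (su2orbit_sphere3 _ p01E); apply/eqP => x1_0.
  have := ASD_bundle_pt15_norm p0_ASD p01E; rewrite x1_0 expr2 mul0r add0r => /eqP.
  by rewrite sqrf_eq1 (negbTE x5_neq1) (negbTE x5_neqN1).
- move=> x5E p02_neq0; rewrite (pole_form (or_introl x5E)) x5E in p02_neq0 *.
  exact/su2orbit_north_sphere2/asd_mx_norm_gt0/p02_neq0.
- case=> [[x5E p02_0]|x5E]; apply: su2orbit_fixed => g g_SU2.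
    have p01 : p0.1 = pt15 0 1 by rewrite (pole_form (or_introl x5E)) x5E.
    by rewrite [p0]surjective_pairing p01 p02_0 su2_fixes_north0.
  by rewrite (pole_form (or_intror x5E)) x5E su2_fixes_south.
Qed.
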